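(* Every well-graded $\cup$-closed family of finite sets is a partial learning space. The converse is false: there exists a partial learning space which is neither $\cup$-closed nor well-graded.
   Context: $d(K,L)=|K\triangle L|$ with $\triangle$ the symmetric difference. A family $\mathcal{K}$ is well-graded if for any two distinct $K,L\in\mathcal{K}$ there is a sequence $K_0=K,K_1,\dots,K_n=L$ in $\mathcal{K}$ with $n=d(K,L)$ and $d(K_i,K_{i+1})=1$. A family is $\cup$-closed if the union of any non-empty subfamily belongs to it. A partial knowledge structure is a family $\mathcal{F}$ of subsets of a set $Q$ with $Q=\bigcup\mathcal{F}\in\mathcal{F}$. A partial learning space is a partial knowledge structure $\mathcal{F}$ satisfying: [L1] for $K\subset L$ in $\mathcal{F}$ with $|L\setminus K|=n$ there is a chain $K=K_0\subset K_1\subset\dots\subset K_n=L$ with $K_{i+1}=K_i\cup\{q_i\}\in\mathcal{F}$, $q_i\notin K_i$; [L2] if $K\subset L$ are in $\mathcal{F}$ and $K\cup\{q\}\in\mathcal{F}$ with $q\notin K$, then $L\cup\{q\}\in\mathcal{F}$. (The family $\{\varnothing\}$ counts as well-graded, $\cup$-closed, and a partial learning space.) *)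

From mathcomp Require Import all_boot finmap.
Set Implicit Arguments. Unset Strict Implicit. Unset Printing Implicit Defensive.
Local Open Scope fset_scope.

Section Families.
Variable T : choiceType.

Definition family := {fset T} -> Prop.

Definition fdist (K L : {fset T}) : nat := #|` ((K `\` L) `|` (L `\` K)) |.

Definition is_union (S : family) (U : {fset T}) : Prop :=
  forall x : T, x \in U <-> exists2 X, S X & x \in X.

Definition well_graded (F : family) : Prop :=
  forall K L, F K -> F L -> K <> L ->
    exists f : nat -> {fset T},
      [/\ f 0 = K, f (fdist K L) = L,
          (forall i, i <= fdist K L -> F (f i)) &
          (forall i, i < fdist K L -> fdist (f i) (f i.+1) = 1)].

Definition union_closed (F : family) : Prop :=
  forall S : family, (forall X, S X -> F X) -> (exists X, S X) ->
    exists2 U, F U & is_union S U.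

Definition partial_knowledge_structure (F : family) : Prop :=
  exists2 Q, F Q & is_union F Q.

Definition axiom_L1 (F : family) : Prop :=
  forall K L, F K -> F L -> K `<` L ->
    exists (f : nat -> {fset T}) (q : nat -> T),
      [/\ f 0 = K, f #|` L `\` K| = L &
          forall i, i < #|` L `\` K| ->
            [/\ q i \notin f i, f i.+1 = f i `|` [fset q i] & F (f i.+1)]].

Definition axiom_L2 (F : family) : Prop :=
  forall K L (q : T), F K -> F L -> K `<` L ->
    q \notin K -> F (K `|` [fset q]) -> F (L `|` [fset q]).

Definition partial_learning_space (F : family) : Prop :=
  [/\ partial_knowledge_structure F, axiom_L1 F & axiom_L2 F].

End Families.

(* In a well-graded family, a geodesic from K to a superset L must start by
   adding a point of L \ K, so induction on |L \ K| gives [L1]; [L2] holds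
   because L ∪ {q} is the union of L and K ∪ {q}.  A five-set family on {0,1,2}
   shows that the converse fails. *)
From mathcomp Require Import all_boot finmap.
From mathcomp Require Import zify.
Set Implicit Arguments. Unset Strict Implicit. Unset Printing Implicit Defensive.
Local Open Scope fset_scope.

Section SymmetricDifference.
Variable T : choiceType.
Implicit Types A B C : {fset T}.

Definition symdiff A B := (A `\` B) `|` (B `\` A).

Lemma in_symdiff A B z : (z \in symdiff A B) = ((z \in A) != (z \in B)).
Proof. by rewrite !inE; case: (z \in A); case: (z \in B). Qed.

Lemma fdist_xx A : fdist A A = 0.
Proof.
apply/eqP; rewrite cardfs_eq0; apply/eqP/fsetP => z.
by rewrite -[_ `|` _]/(symdiff A A) in_symdiff inE eqxx.
Qed.

Lemma fdist_eq0 A B : fdist A B = 0 -> A = B.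
Proof.
move/cardfs0_eq/fsetP => AB; apply/fsetP => z.
by have := AB z; rewrite -[_ `|` _]/(symdiff A B) in_symdiff inE => /negbFE/eqP.
Qed.

Lemma fdist_triangle A B C : fdist A C <= fdist A B + fdist B C.
Proof.
have sub : symdiff A C `<=` symdiff A B `|` symdiff B C.
  apply/fsubsetP => z; rewrite in_fsetU !in_symdiff.
  by case: (z \in A); case: (z \in B); case: (z \in C).
by apply: leq_trans (fsubset_leq_card sub) _; rewrite cardfsU leq_subr.
Qed.

Lemma fdist_path_le (f : nat -> {fset T}) d :
    (forall i, i < d -> fdist (f i) (f i.+1) = 1) ->
  forall i j, i <= j <= d -> fdist (f i) (f j) <= j - i.
Proof.
move=> unit_step i; elim=> [|j IHj] /andP [le_ij le_jd].
  by move: le_ij; rewrite leqn0 => /eqP ->; rewrite fdist_xx.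
have [->|ne_ij] := eqVneq i j.+1; first by rewrite fdist_xx.
have le_ij' : i <= j by rewrite -ltnS ltn_neqAle ne_ij le_ij.
apply: leq_trans (fdist_triangle _ (f j) _) _.
have IH : fdist (f i) (f j) <= j - i by apply: IHj; rewrite le_ij' ltnW.
rewrite unit_step //; lia.
Qed.

Lemma fdist1_symdiff A B : fdist A B = 1 -> exists x, symdiff A B = [fset x].
Proof. by move=> AB1; apply/cardfs1P/eqP. Qed.

Lemma symdiff_fset1_notin A B x :
  symdiff A B = [fset x] -> x \notin A -> B = A `|` [fset x].
Proof.
move=> /fsetP ABx xA; apply/fsetP => z; have := ABx z.
rewrite in_symdiff !inE; have [->|_] := eqVneq z x.
  by rewrite (negPf xA); case: (x \in B).
by case: (z \in A); case: (z \in B).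
Qed.

Lemma fdist_symdiff_fset1 A B C x :
  symdiff A B = [fset x] -> (x \in A) = (x \in C) -> fdist B C = (fdist A C).+1.
Proof.
move=> /fsetP ABx xAC.
have BC : symdiff B C = x |` symdiff A C.
  apply/fsetP => z; have := ABx z; rewrite !in_symdiff !inE.
  have [->|_] := eqVneq z x; first by rewrite -xAC; case: (x \in A); case: (x \in B).
  by case: (z \in A); case: (z \in B); case: (z \in C).
by rewrite /fdist -!/(symdiff _ _) BC cardfsU1 in_symdiff xAC eqxx.
Qed.

End SymmetricDifference.

Section Families.
Variable T : choiceType.
Implicit Types (F : {fset T} -> Prop) (K L : {fset T}).

Lemma well_graded_fsetU1 F K L : well_graded F -> F K -> F L -> K `<` L ->
  exists2 q, q \in L `\` K & F (K `|` [fset q]).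
Proof.
move=> wgF FK FL ltKL; have subKL := fsubsetP (fproper_sub ltKL).
have neKL : K <> L by move=> eqKL; move: ltKL; rewrite eqKL fproperEneq eqxx.
have [f [f0 fd Ff unit_step]] := wgF K L FK FL neKL.
set d := fdist K L in fd Ff unit_step.
have d_gt0 : 0 < d by rewrite lt0n; apply/eqP => /fdist_eq0.
have [x Kf1x] : exists x, symdiff K (f 1) = [fset x].
  by apply: fdist1_symdiff; rewrite -f0 unit_step.
have f1L : fdist (f 1) L <= d - 1.
  by rewrite -fd; apply: (fdist_path_le unit_step); rewrite d_gt0 leqnn.
(* A first step that does not add a point of [L `\` K] moves away from [L]. *)
have xKL : (x \in K) != (x \in L).
  by apply/negP => /eqP xKL; move: f1L; rewrite (fdist_symdiff_fset1 Kf1x xKL); lia.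
have xK : x \notin K by apply: contra xKL => xK; rewrite xK subKL.
exists x; first by rewrite inE xK; move: xKL; rewrite (negPf xK); case: (x \in L).
by rewrite -(symdiff_fset1_notin Kf1x xK); apply: Ff.
Qed.

Lemma axiom_L1_of_fsetU1 F :
    (forall K L, F K -> F L -> K `<` L ->
       exists2 q, q \in L `\` K & F (K `|` [fset q])) ->
  axiom_L1 F.
Proof.
move=> extF K L FK FL ltKL.
have [t _ _] : exists2 t, t \in L & t \notin K.
  by move: ltKL; rewrite fproperE => /andP [_ /fsubsetPn].
move: (fproper_sub ltKL) FK; move cardLK: #|` L `\` K| => n; clear ltKL.
elim: n K cardLK => [|n IHn] K cardLK subKL FK.
  exists (fun=> K), (fun=> t); split=> //; apply/eqP.
  by rewrite eqEfsubset subKL -fsetD_eq0 -cardfs_eq0 cardLK.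
have ltKL' : K `<` L.
  by rewrite fproperEneq subKL andbT; apply/eqP => eqKL; move: cardLK; rewrite eqKL fsetDv.
have [q qLK FKq] := extF K L FK FL ltKL'.
have /andP [qK qL] : (q \notin K) && (q \in L) by rewrite -in_fsetD.
have cardLKq : #|` L `\` (K `|` [fset q])| = n.
  by apply/succn_inj; rewrite -fsetDDl -cardLK (cardfsD1 q (L `\` K)) qLK.
have subKqL : K `|` [fset q] `<=` L by rewrite fsubUset subKL fsub1set.
have [f [g [f0 fn step]]] := IHn _ cardLKq subKqL FKq.
exists (fun i => if i is i'.+1 then f i' else K).
exists (fun i => if i is i'.+1 then g i' else q).
by split=> // -[_|i /step]; rewrite ?f0.
Qed.

Lemma union_closed_fsetU F A B :
  union_closed F -> F A -> F B -> F (A `|` B).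
Proof.
move=> ucF FA FB.
have [U FU unionU] : exists2 U, F U & is_union (fun X => X = A \/ X = B) U.
  by apply: ucF; [move=> X [->|->] | exists A; left].
suff -> : A `|` B = U by [].
apply/fsetP => z; apply/idP/idP => [|/unionU [X [->|->] zX]]; rewrite inE ?zX ?orbT //.
by case/orP=> [zA|zB]; apply/unionU; [exists A; [left|] | exists B; [right|]].
Qed.

Lemma partial_knowledge_structure_of_union_closed F : (exists K, F K) -> union_closed F ->
  partial_knowledge_structure F.
Proof. by move=> neF ucF; apply: ucF. Qed.

Lemma axiom_L2_of_union_closed F : union_closed F -> axiom_L2 F.
Proof.
move=> ucF K L q _ FL ltKL _ FKq.
have <- : L `|` (K `|` [fset q]) = L `|` [fset q].
  by rewrite fsetUA (fsetUidPl _ _ (fproper_sub ltKL)).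
exact: union_closed_fsetU.
Qed.

Lemma partial_learning_space_of_well_graded_union_closed F : (exists K, F K) ->
  well_graded F -> union_closed F -> partial_learning_space F.
Proof.
move=> neF wgF ucF; split; first exact: partial_knowledge_structure_of_union_closed.
  by apply: axiom_L1_of_fsetU1 => K L; apply: well_graded_fsetU1.
exact: axiom_L2_of_union_closed.
Qed.

End Families.

Definition Q012 : {fset nat} := [fset 0; 1; 2].

Definition example_pattern (b0 b1 b2 : bool) := (b0 || b1) && (b2 || (b0 != b1)).

(* The family {0}, {1}, {0,2}, {1,2}, {0,1,2}, described by the membership bits of 0, 1, 2. *)
Definition example_family (X : {fset nat}) : Prop :=
  X `<=` Q012 /\ example_pattern (0 \in X) (1 \in X) (2 \in X).

Lemma fproper_Q012 (K L : {fset nat}) : L `<=` Q012 -> K `<` L ->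
  [/\ (0 \in K) ==> (0 \in L), (1 \in K) ==> (1 \in L), (2 \in K) ==> (2 \in L)
    & [|| (0 \in L) && (0 \notin K), (1 \in L) && (1 \notin K)
        | (2 \in L) && (2 \notin K)]].
Proof.
move=> /fsubsetP subL ltKL; have /fsubsetP subKL := fproper_sub ltKL.
split; try exact/implyP/subKL.
move: ltKL; rewrite fproperE => /andP [_ /fsubsetPn [y yL yK]].
have := subL y yL; rewrite !inE => /orP [/orP [] | ] /eqP Ey;
  by move: yL yK; rewrite Ey => -> ->; rewrite ?orbT.
Qed.

Ltac decide_bits K L :=
  rewrite /example_pattern ?inE /=;
  case: (0 \in K); case: (1 \in K); case: (2 \in K);
  case: (0 \in L); case: (1 \in L); case: (2 \in L).

Lemma example_L1 : axiom_L1 example_family.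
Proof.
apply: axiom_L1_of_fsetU1 => K L [subK PK] [subL PL] ltKL.
have bits := fproper_Q012 subL ltKL.
have pick q : q \in Q012 -> q \in L `\` K ->
    example_pattern ((0 \in K) || (0 == q)) ((1 \in K) || (1 == q)) ((2 \in K) || (2 == q)) ->
  exists2 q, q \in L `\` K & example_family (K `|` [fset q]).
  by move=> qQ qLK Pq; exists q => //; split; rewrite ?fsubUset ?subK ?fsub1set // !inE.
have [k2|k2] := boolP (2 \in K); last first.
  by apply: (pick 2); move: k2 PK PL; case: bits; decide_bits K L.
have [k0|k0] := boolP (0 \in K); last first.
  by apply: (pick 0); move: k2 k0 PK PL; case: bits; decide_bits K L.
by apply: (pick 1); move: k2 k0 PK PL; case: bits; decide_bits K L.
Qed.

Lemma example_L2 : axiom_L2 example_family.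
Proof.
move=> K L q [_ PK] [subL PL] ltKL qK [subKq PKq].
have bits := fproper_Q012 subL ltKL.
have qQ : q \in Q012 by apply: (fsubsetP subKq); rewrite !inE eqxx orbT.
split; first by rewrite fsubUset subL fsub1set.
move: qQ; rewrite !inE => /orP [/orP [] | ] /eqP eq_q; subst q;
  by move: PKq qK PK PL; case: bits; decide_bits K L.
Qed.

Lemma example_partial_knowledge_structure : partial_knowledge_structure example_family.
Proof.
have FQ : example_family Q012 by split; rewrite ?fsubset_refl // /example_pattern !inE.
exists Q012 => // x; split=> [xQ | [X [/fsubsetP subX _] /subX //]].
by exists Q012.
Qed.

Lemma example_family0 : example_family [fset 0].
Proof. by split; rewrite ?fsub1set /example_pattern !inE. Qed.

Lemma example_family1 : example_family [fset 1].
Proof. by split; rewrite ?fsub1set /example_pattern !inE. Qed.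

Lemma example_not_union_closed : ~ union_closed example_family.
Proof.
move=> ucF; have [_] := union_closed_fsetU ucF example_family0 example_family1.
by rewrite /example_pattern !inE.
Qed.

Lemma example_not_well_graded : ~ well_graded example_family.
Proof.
(* The only sets between {0} and {1}, namely {} and {0,1}, are missing. *)
move=> wgF.
have ne01 : [fset 0] <> [fset 1] :> {fset nat}.
  by move/fsetP/(_ 0); rewrite !inE.
have [f [f0 f2 Ff unit_step]] := wgF _ _ example_family0 example_family1 ne01.
have d2 : fdist [fset 0] [fset 1] = 2.
  rewrite /fdist -/(symdiff _ _) (_ : symdiff _ _ = [fset 0; 1]) ?cardfs2 //.
  by apply/fsetP => z; rewrite in_symdiff !inE; case: (z =P 0) => [->|]; case: (z == 1).
rewrite d2 in f2 Ff unit_step.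
have [_ PM] := Ff 1 isT.
have [x /fsetP Mx] : exists x, symdiff [fset 0] (f 1) = [fset x].
  by apply: fdist1_symdiff; rewrite -f0 unit_step.
have [y /fsetP My] : exists y, symdiff (f 1) [fset 1] = [fset y].
  by apply: fdist1_symdiff; rewrite -f2 unit_step.
move: PM (Mx 0) (Mx 1) (Mx 2) (My 0) (My 1) (My 2).
rewrite /example_pattern !in_symdiff !inE.
case: (0 \in f 1); case: (1 \in f 1); case: (2 \in f 1) => //;
  by case: x {Mx} => [|[|[|x]]]; case: y {My} => [|[|[|y]]].
Qed.

Theorem lemma5 :
  (forall (T : choiceType) (F : {fset T} -> Prop),
      (exists K, F K) -> well_graded F -> union_closed F ->
      partial_learning_space F)
  /\
  (exists F : {fset nat} -> Prop,
      [/\ partial_learning_space F, ~ union_closed F & ~ well_graded F]).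
Proof.
split; first exact: partial_learning_space_of_well_graded_union_closed.
exists example_family; split.
- by split; [exact: example_partial_knowledge_structure | exact: example_L1 | exact: example_L2].
- exact: example_not_union_closed.
- exact: example_not_well_graded.
Qed.
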